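(* Let $A$ be a commutative noetherian ring containing a field $k$ with $1/2\in k$, and let $P$ be a projective $A$-module. The obstruction class map $\chi:\mathcal{LO}(P)\to\pi_0(\mathcal{Q}(P))$ induces a well-defined map $\overline{\chi}:\pi_0(\mathcal{LO}(P))\to\pi_0(\mathcal{Q}(P))$, and $\overline\chi$ is a bijection. Its inverse is the map $\overline{\eta}':\pi_0(\mathcal{Q}(P))\to\pi_0(\mathcal{LO}(P))$ induced by $\eta'$. Consequently the induced maps $\overline\eta:\pi_0(\widetilde Q(P))\to\pi_0(\mathcal{LO}(P))$, $\overline{\eta}'$, $\overline\nu:\pi_0(\widetilde Q(P))\to\pi_0(\mathcal{Q}(P))$ and $\overline\kappa:\pi_0(\widetilde Q(P))\to\pi_0(\widetilde Q'(P))$ are all bijections.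
   Context: $P^*=\mathrm{Hom}_A(P,A)$ and $P[T]=P\otimes_AA[T]$. Sets. Define $\widetilde Q(P)=\{(f,p,s)\in P^*\oplus P\oplus A: f(p)+s(s-1)=0\}$, $\widetilde Q'(P)=\{(f,p,z): f(p)+z^2=1\}$, $\mathcal{Q}(P)=\{(f,s)\in P^*\oplus A: s(1-s)\in f(P)\}$. A local $P$-orientation is a pair $(I,\omega)$, $I$ an ideal and $\omega:P\to I/I^2$ surjective; $\mathcal{LO}(P)$ is their set. All of these are defined likewise over $A[T]$ for $P[T]$. Homotopy sets. For $\mathcal{F}=\widetilde Q,\widetilde Q',\mathcal{Q}$, $\pi_0(\mathcal{F}(P))$ is the quotient of $\mathcal{F}(P)$ by the equivalence relation generated by $H(0)\sim H(1)$ for $H(T)\in\mathcal{F}(P[T])$, with $H(t)$ the specialization $T=t$. $\pi_0(\mathcal{LO}(P))$ is the quotient of $\mathcal{LO}(P)$ by the equivalence relation generated by $(J(0),\Omega(0))\sim(J(1),\Omega(1))$ for $(J,\Omega)\in\mathcal{LO}(P[T])$, where $J(t)$ is the image of $J$ under $T\mapsto t$ and $\Omega(t)$ is the induced map. Maps. - $\nu(f,p,s)=(f,s)$. - $\eta(f,p,s)=\eta'(f,s)=(f(P)+As,\omega)$, with $\omega$ induced by $f$. - $\kappa(f,p,s)=(2f,2p,2s-1)$, a bijection $\widetilde Q(P)\to\widetilde Q'(P)$. All of these are compatible with homotopy and induce the barred maps. - $\chi(I,\omega)$ is the class $[(f,s)]$ of any $(f,s)\in\mathcal{Q}(P)$ such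 that $f:P\to I$ lifts $\omega$, $s\in I$, and $I=f(P)+As$. Such pairs exist, and this class is independent of the choice. *)

From HB Require Import structures.
From mathcomp Require Import all_boot all_order all_algebra.
From Stdlib Require Import Relations.
Set Implicit Arguments. Unset Strict Implicit. Unset Printing Implicit Defensive.
Import Order.TTheory GRing.Theory Num.Theory.
Local Open Scope ring_scope.

Definition is_ideal (R : comNzRingType) (I : R -> Prop) : Prop :=
  [/\ I 0, (forall x y, I x -> I y -> I (x + y)) & (forall a x, I x -> I (a * x))].

Definition noetherian (R : comNzRingType) : Prop :=
  forall I : nat -> R -> Prop,
    (forall m, is_ideal (I m)) ->
    (forall m x, I m x -> I m.+1 x) ->
    exists N, forall m, (N <= m)%N -> forall x, I m x <-> I N x.

Definition ideal_sq (R : comNzRingType) (I : R -> Prop) (x : R) : Prop :=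
  exists (m : nat) (a b : 'I_m -> R),
    (forall i, I (a i) /\ I (b i)) /\ x = \sum_(i < m) a i * b i.

Definition same_set (R : Type) (I J : R -> Prop) := forall x, I x <-> J x.

(* A finitely generated projective R-module P is represented as the image  *)
(* of an idempotent matrix e : P = { p : 'rV_n | p *m e = p }.             *)
(* Its dual P^* = Hom(P,R) is represented as { f : 'cV_n | e *m f = f },   *)
(* with evaluation f(p) = (p *m f) 0 0.  Base change P[T] = P (x) R[T] is  *)
(* the module given by the same idempotent viewed over {poly R}.          *)

Section Modules.
Variables (R : comNzRingType) (n : nat).

Definition inP (e : 'M[R]_n) (p : 'rV[R]_n) : Prop := p *m e = p.
Definition inPdual (e : 'M[R]_n) (f : 'cV[R]_n) : Prop := e *m f = f.
Definition ev (f : 'cV[R]_n) (p : 'rV[R]_n) : R := (p *m f) 0 0.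

Definition inQt (e : 'M[R]_n) (x : 'cV[R]_n * 'rV[R]_n * R) : Prop :=
  let: (f, p, s) := x in
  [/\ inPdual e f, inP e p & ev f p + s * (s - 1) = 0].

Definition inQt' (e : 'M[R]_n) (x : 'cV[R]_n * 'rV[R]_n * R) : Prop :=
  let: (f, p, z) := x in
  [/\ inPdual e f, inP e p & ev f p + z ^+ 2 = 1].

Definition inQc (e : 'M[R]_n) (x : 'cV[R]_n * R) : Prop :=
  let: (f, s) := x in
  inPdual e f /\ exists p, inP e p /\ ev f p = s * (1 - s).

Definition imP (e : 'M[R]_n) (f : 'cV[R]_n) (x : R) : Prop :=
  exists p, inP e p /\ x = ev f p.

(* Local P-orientations (I, omega), omega : P -> I/I^2 surjective.  Since P  *)
(* is projective, omega is represented by a lift f : P -> I (f in P^*,     *)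
(* f(P) \subset I); surjectivity of omega means I = f(P) + I^2.  Two lifts  *)
(* represent the same omega iff they agree modulo I^2 (see same_LO).       *)
Definition inLO (e : 'M[R]_n) (x : (R -> Prop) * 'cV[R]_n) : Prop :=
  let: (J0, f) := x in
  [/\ is_ideal J0, inPdual e f,
      (forall p, inP e p -> J0 (ev f p))
    & (forall a, J0 a -> exists p, inP e p /\ ideal_sq J0 (a - ev f p))].

Definition same_LO (e : 'M[R]_n) (x y : (R -> Prop) * 'cV[R]_n) : Prop :=
  inLO e x /\ inLO e y /\ same_set x.1 y.1 /\
  forall p, inP e p -> ideal_sq x.1 (ev x.2 p - ev y.2 p).

End Modules.

Definition eT (R : comNzRingType) (n : nat) (e : 'M[R]_n) : 'M[{poly R}]_n :=
  map_mx polyC e.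

Definition spec_cV (R : comNzRingType) (n : nat) (t : R) (F : 'cV[{poly R}]_n)
  : 'cV[R]_n := map_mx (fun q => q.[t]) F.
Definition spec_rV (R : comNzRingType) (n : nat) (t : R) (F : 'rV[{poly R}]_n)
  : 'rV[R]_n := map_mx (fun q => q.[t]) F.

Definition spec_ideal (R : comNzRingType) (t : R) (J : {poly R} -> Prop)
  : R -> Prop := fun x => exists y, J y /\ x = y.[t].

Definition spec_Qt (R : comNzRingType) (n : nat) (t : R)
  (H : 'cV[{poly R}]_n * 'rV[{poly R}]_n * {poly R}) : 'cV[R]_n * 'rV[R]_n * R :=
  let: (f, p, s) := H in (spec_cV t f, spec_rV t p, s.[t]).

Definition spec_Qc (R : comNzRingType) (n : nat) (t : R)
  (H : 'cV[{poly R}]_n * {poly R}) : 'cV[R]_n * R :=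
  let: (f, s) := H in (spec_cV t f, s.[t]).

Definition spec_LO (R : comNzRingType) (n : nat) (t : R)
  (H : ({poly R} -> Prop) * 'cV[{poly R}]_n) : (R -> Prop) * 'cV[R]_n :=
  let: (J, F) := H in (spec_ideal t J, spec_cV t F).

Definition htpy_Qt (R : comNzRingType) (n : nat) (e : 'M[R]_n) :
  relation ('cV[R]_n * 'rV[R]_n * R) :=
  clos_refl_sym_trans _ (fun x y => exists H, inQt (eT e) H /\
                           x = spec_Qt 0 H /\ y = spec_Qt 1 H).

Definition htpy_Qt' (R : comNzRingType) (n : nat) (e : 'M[R]_n) :
  relation ('cV[R]_n * 'rV[R]_n * R) :=
  clos_refl_sym_trans _ (fun x y => exists H, inQt' (eT e) H /\
                           x = spec_Qt 0 H /\ y = spec_Qt 1 H).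

Definition htpy_Qc (R : comNzRingType) (n : nat) (e : 'M[R]_n) :
  relation ('cV[R]_n * R) :=
  clos_refl_sym_trans _ (fun x y => exists H, inQc (eT e) H /\
                           x = spec_Qc 0 H /\ y = spec_Qc 1 H).

Definition htpy_LO (R : comNzRingType) (n : nat) (e : 'M[R]_n) :
  relation ((R -> Prop) * 'cV[R]_n) :=
  clos_refl_sym_trans _ (fun x y => same_LO e x y \/
     exists H, inLO (eT e) H /\
       same_LO e x (spec_LO 0 H) /\ same_LO e y (spec_LO 1 H)).

Definition nu_map (R : comNzRingType) (n : nat)
  (x : 'cV[R]_n * 'rV[R]_n * R) : 'cV[R]_n * R :=
  let: (f, p, s) := x in (f, s).

Definition eta'_map (R : comNzRingType) (n : nat) (e : 'M[R]_n)
  (x : 'cV[R]_n * R) : (R -> Prop) * 'cV[R]_n :=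
  let: (f, s) := x in
  (fun a => exists p b, inP e p /\ a = ev f p + b * s, f).

Definition eta_map (R : comNzRingType) (n : nat) (e : 'M[R]_n)
  (x : 'cV[R]_n * 'rV[R]_n * R) : (R -> Prop) * 'cV[R]_n :=
  eta'_map e (nu_map x).

Definition kappa_map (R : comNzRingType) (n : nat)
  (x : 'cV[R]_n * 'rV[R]_n * R) : 'cV[R]_n * 'rV[R]_n * R :=
  let: (f, p, s) := x in (2%:R *: f, 2%:R *: p, 2%:R * s - 1).

(* (f, s) is an admissible choice for chi(I, omega): (f,s) in Q(P), f : P -> I *)
(* lifts omega, s in I and I = f(P) + A s.                                 *)
Definition chi_rep (R : comNzRingType) (n : nat) (e : 'M[R]_n)
  (x : (R -> Prop) * 'cV[R]_n) (q : 'cV[R]_n * R) : Prop :=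
  let: (J0, f0) := x in let: (f, s) := q in
  [/\ inQc e q,
      (forall p, inP e p -> J0 (ev f p) /\ ideal_sq J0 (ev f p - ev f0 p)),
      J0 s
    & same_set J0 (fun a => exists p b, inP e p /\ a = ev f p + b * s)].

Definition induces_bij (X Y : Type) (memX : X -> Prop) (memY : Y -> Prop)
  (RX : relation X) (RY : relation Y) (g : X -> Y) : Prop :=
  [/\ (forall x, memX x -> memY (g x)),
      (forall x x', memX x -> memX x' -> RX x x' -> RY (g x) (g x')),
      (forall x x', memX x -> memX x' -> RY (g x) (g x') -> RX x x')
    & (forall y, memY y -> exists x, memX x /\ RY (g x) y)].

(* A local orientation [(I, w)] with lift [f] satisfies [I = f(P) + I^2]; as [I] is
   finitely generated, the determinant trick gives [s] in [I] with [(1 - s) I] inside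
   [f(P)], and [(f, s)] represents [chi(I, w)].  Two such [s, s'] for the same [f] are
   joined by the path [s + T (s' - s)], which stays in [Q(P[T])] because [s' - s] lies
   in [f(P)]; two lifts [f, g] are joined by running the determinant trick over [A[T]]
   for [f + T (g - f)], which is why Hilbert's basis theorem enters.  The same argument
   over [A[T]] lifts homotopies of local orientations, so [chi] is well defined, and
   [eta'] inverts it since [(f, s)] represents [eta'(f, s)].  The fibres of [nu] are
   joined by [(f, p + T (p' - p), s)], and [kappa] is inverted by
   [(f, p, z) |-> (f, p, z + 1) / 2]. *)

From HB Require Import structures.
From mathcomp Require Import all_boot all_order all_algebra fingroup perm.
From Stdlib Require Import Relations Classical IndefiniteDescription.
From mathcomp Require Import ring zify.
Set Implicit Arguments. Unset Strict Implicit. Unset Printing Implicit Defensive.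
Import GRing.Theory.
Local Open Scope ring_scope.

Section Ideals.
Variable R : comNzRingType.
Implicit Types (I J : R -> Prop) (l : seq R) (x y : R).

Lemma ideal0 I : is_ideal I -> I 0. Proof. by case. Qed.

Lemma idealD I x y : is_ideal I -> I x -> I y -> I (x + y).
Proof. by case=> _ + _; apply. Qed.

Lemma idealMl I a x : is_ideal I -> I x -> I (a * x).
Proof. by case=> _ _; apply. Qed.

Lemma idealMr I a x : is_ideal I -> I x -> I (x * a).
Proof. by rewrite mulrC; apply: idealMl. Qed.

Lemma idealN I x : is_ideal I -> I x -> I (- x).
Proof. by rewrite -mulN1r; apply: idealMl. Qed.

Lemma idealB I x y : is_ideal I -> I x -> I y -> I (x - y).
Proof. by move=> hI hx hy; apply: idealD (idealN hI hy). Qed.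

Lemma ideal_sum I (T : Type) (r : seq T) (P : pred T) (F : T -> R) :
  is_ideal I -> (forall i, P i -> I (F i)) -> I (\sum_(i <- r | P i) F i).
Proof.
by move=> hI hF; apply: big_ind => //; [apply: ideal0 | move=> x y; apply: idealD].
Qed.

Lemma is_ideal_same I J : same_set I J -> is_ideal I -> is_ideal J.
Proof.
move=> IJ [I0 ID IM]; split; first exact/IJ.
- by move=> x y /IJ hx /IJ hy; apply/IJ/ID.
- by move=> a x /IJ hx; apply/IJ/IM.
Qed.

Lemma ideal_sq0 I : ideal_sq I 0.
Proof. by exists 0%N, (fun _ => 0), (fun _ => 0); split; [case | rewrite big_ord0]. Qed.

Lemma ideal_sqM I x y : I x -> I y -> ideal_sq I (x * y).
Proof. by move=> hx hy; exists 1%N, (fun _ => x), (fun _ => y); rewrite big_ord1. Qed.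

Lemma is_ideal_sq I : is_ideal I -> is_ideal (ideal_sq I).
Proof.
move=> hI; split; first exact: ideal_sq0.
- move=> _ _ [m1 [a1 [b1 [h1 ->]]]] [m2 [a2 [b2 [h2 ->]]]].
  pose glue (u : 'I_m1 -> R) (v : 'I_m2 -> R) (i : 'I_(m1 + m2)) :=
    match split i with inl j => u j | inr j => v j end.
  exists (m1 + m2)%N, (glue a1 a2), (glue b1 b2); split.
    by move=> i; rewrite /glue; case: (split i).
  by rewrite big_split_ord /glue; congr (_ + _); apply: eq_bigr => i _;
    [rewrite (unsplitK (inl i)) | rewrite (unsplitK (inr i))].
- move=> c _ [m [a [b [h ->]]]]; exists m, (fun i => c * a i), b; split.
    by move=> i; have [ha hb] := h i; split => //; apply: idealMl.
  by rewrite mulr_sumr; apply: eq_bigr => i _; rewrite mulrA.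
Qed.

Lemma ideal_sq_same I J x : same_set I J -> ideal_sq I x -> ideal_sq J x.
Proof.
move=> IJ [m [a [b [h ->]]]]; exists m, a, b; split => // i.
by have [ha hb] := h i; split; apply/IJ.
Qed.

Lemma ideal_sq_rmorph (S : comNzRingType) (h : {rmorphism R -> S}) I (J : S -> Prop) x :
  (forall y, I y -> J (h y)) -> ideal_sq I x -> ideal_sq J (h x).
Proof.
move=> hIJ [m [a [b [hab ->]]]]; exists m, (h \o a), (h \o b); split.
  by move=> i; have [ha hb] := hab i; split; apply: hIJ.
by rewrite rmorph_sum; apply: eq_bigr => i _; rewrite rmorphM.
Qed.

Definition span l x := exists c : nat -> R, x = \sum_(i < size l) c i * l`_i.

Lemma is_ideal_span l : is_ideal (span l).
Proof.
split.
- by exists (fun _ => 0); rewrite big1 // => i _; rewrite mul0r.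
- move=> _ _ [c ->] [d ->]; exists (fun i => c i + d i).
  by rewrite -big_split; apply: eq_bigr => i _; rewrite mulrDl.
- move=> a _ [c ->]; exists (fun i => a * c i).
  by rewrite mulr_sumr; apply: eq_bigr => i _; rewrite mulrA.
Qed.

Lemma span_nth l i : (i < size l)%N -> span l l`_i.
Proof.
move=> lt_il; exists (fun j => (j == i)%:R).
rewrite (bigD1 (Ordinal lt_il)) //= eqxx mul1r big1 ?addr0 // => j neq_ji.
suff /negbTE -> : nat_of_ord j != i by rewrite mul0r.
by apply: contraNneq neq_ji => eq_ji; apply/eqP/val_inj.
Qed.

Lemma span_mem l x : x \in l -> span l x.
Proof. by move=> lx; rewrite -(nth_index 0 lx); apply: span_nth; rewrite index_mem. Qed.

Lemma span_sub l I : is_ideal I -> (forall x, x \in l -> I x) ->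
  forall x, span l x -> I x.
Proof.
move=> hI hl _ [c ->]; apply: ideal_sum => // i _; apply: idealMl => //.
by apply: hl; rewrite mem_nth.
Qed.

Lemma span_cons l a x : span l x -> span (a :: l) x.
Proof.
case=> c ->; exists (fun i => if i is i'.+1 then c i' else 0).
by rewrite /= big_ord_recl /= mul0r add0r.
Qed.

Lemma ideal_sq_span l x : ideal_sq (span l) x ->
  exists2 D : nat -> R, (forall j, span l (D j)) & x = \sum_(j < size l) D j * l`_j.
Proof.
case=> m [a [b [hab ->]]].
have /functional_choice [c hc] : forall i : 'I_m, exists c : nat -> R,
    b i = \sum_(j < size l) c j * l`_j by move=> i; by have [_ [d ->]] := hab i; exists d.
exists (fun j => \sum_(i < m) a i * c i j).
  move=> j; apply: ideal_sum (is_ideal_span l) _ => i _.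
  by apply: idealMr (is_ideal_span l) _; have [] := hab i.
under eq_bigr => i _ do rewrite hc mulr_sumr.
rewrite exchange_big; apply: eq_bigr => j _; rewrite mulr_suml.
by apply: eq_bigr => i _; rewrite mulrA.
Qed.

End Ideals.

Section Nakayama.
Variable R : comNzRingType.
Implicit Types (I K : R -> Prop) (l : seq R).

Lemma prod_congr1 I (T : Type) (r : seq T) (P : pred T) (F : T -> R) :
  is_ideal I -> (forall i, P i -> I (F i - 1)) -> I (\prod_(i <- r | P i) F i - 1).
Proof.
move=> hI hF; apply: (big_rec (fun x => I (x - 1))); first by rewrite subrr; apply: ideal0.
move=> i x Pi hx; rewrite (_ : F i * x - 1 = F i * (x - 1) + (F i - 1)); last by ring.
by apply: idealD => //; [apply: idealMl | apply: hF].
Qed.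

Lemma det_congr1 I m (M : 'M[R]_m) : is_ideal I ->
  (forall i j, I (M i j - (i == j)%:R)) -> I (\det M - 1).
Proof.
move=> hI hM; rewrite /determinant (bigD1 1%g) //= odd_perm1 expr0 mul1r -addrAC.
apply: idealD => //.
  by apply: prod_congr1 => // i _; rewrite perm1; have := hM i i; rewrite eqxx.
apply: ideal_sum => // s s_neq1; apply: idealMl => //.
have [i moved_i] : exists i, s i != i.
  apply/existsP; apply: contraNT s_neq1 => /existsPn fixed.
  by apply/eqP/permP => i; rewrite perm1; apply/eqP/negPn/fixed.
rewrite (bigD1 i) //=; apply: idealMr => //.
by have := hM i (s i); rewrite eq_sym (negbTE moved_i) subr0.
Qed.

(* Determinant trick: writing [l = k + D l], the scalar [det (1 - D)] kills [l]
   modulo [K] and is congruent to [1] modulo [span l]. *)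
Lemma nakayama K l : is_ideal K ->
  (forall x, x \in l -> exists2 k, K k & ideal_sq (span l) (x - k)) ->
  exists2 s, span l s & forall x, span l x -> K ((1 - s) * x).
Proof.
move=> hK hl; set m := size l.
have /functional_choice [kD hkD] : forall i : 'I_m, exists kD : R * (nat -> R),
    [/\ K kD.1, forall j, span l (kD.2 j) & l`_i - kD.1 = \sum_(j < m) kD.2 j * l`_j].
  move=> i; have [k hk /ideal_sq_span [D hD eqD]] := hl _ (mem_nth 0 (ltn_ord i)).
  by exists (k, D).
pose M : 'M[R]_m := \matrix_(i, j) ((i == j)%:R - (kD i).2 j).
pose v : 'cV[R]_m := \col_i l`_i.
pose kv : 'cV[R]_m := \col_i (kD i).1.
have M_l : M *m v = kv.
  apply/matrixP => i j; rewrite !mxE.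
  under eq_bigr => k _ do rewrite !mxE mulrBl.
  rewrite sumrB (bigD1 i) //= eqxx mul1r big1 ?addr0; last first.
    by move=> k neq_ki; rewrite eq_sym (negbTE neq_ki) mul0r.
  by have [_ _ <-] := hkD i; rewrite opprB addrC subrK.
have K_detM_l (i : 'I_m) : K (\det M * l`_i).
  have : ((\det M)%:M *m v) i 0 = (\adj M *m kv) i 0.
    by rewrite -mul_adj_mx -mulmxA M_l.
  rewrite mul_scalar_mx !mxE => ->.
  apply: ideal_sum => // j _; rewrite [kv _ _]mxE; apply: idealMl hK _.
  by have [] := hkD j.
exists (1 - \det M).
  rewrite -opprB; apply: idealN (is_ideal_span l) _.
  apply: det_congr1 (is_ideal_span l) _ => i j.
  rewrite mxE addrAC subrr add0r; apply: idealN (is_ideal_span l) _.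
  by have [] := hkD i.
move=> _ [c ->]; rewrite subKr mulr_sumr; apply: (ideal_sum _ hK) => i _.
by rewrite mulrCA; apply: idealMl hK (K_detM_l i).
Qed.

End Nakayama.

Definition ideals_fg (R : comNzRingType) : Prop :=
  forall I : R -> Prop, is_ideal I -> exists l : seq R, same_set I (span l).

Lemma ex_minimal (T : Type) (m : T -> nat) (P : T -> Prop) : (exists x, P x) ->
  exists x, P x /\ forall y, P y -> (m x <= m y)%N.
Proof.
case=> x Px; have [k le_mk] : exists k, (m x <= k)%N by exists (m x).
elim: k x Px le_mk => [|k IH] x Px le_mk.
  by exists x; split => // y _; move: le_mk; rewrite leqn0 => /eqP ->.
have [[y [Py lt_yx]]|no_smaller] := classic (exists y, P y /\ (m y < m x)%N).
  by apply: (IH y Py); lia.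
exists x; split => // y Py; rewrite leqNgt; apply/negP => lt_yx.
by apply: no_smaller; exists y.
Qed.

Section Noetherian.
Variable R : comNzRingType.

Lemma lead_coef_reduce (l : seq {poly R}) (f : {poly R}) : f != 0 ->
  (forall g, g \in l -> (size g <= size f)%N) ->
  span (map lead_coef l) (lead_coef f) ->
  exists2 g, span l (f - g) & (size g < size f)%N.
Proof.
move=> nz_f sz_l [c]; rewrite size_map => lead_f; set n := size f.
pose r := \sum_(i < size l) (c i)%:P * ('X^(n - size l`_i) * l`_i).
exists (f - r).
  rewrite subKr; apply: ideal_sum (is_ideal_span l) _ => i _.
  by rewrite mulrA; apply: idealMl (is_ideal_span l) (span_nth (ltn_ord i)).
have sz_i (i : 'I_(size l)) : (size (l`_i)%R <= n)%N by apply: sz_l; rewrite mem_nth.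
have n_gt0 : (0 < n)%N by rewrite lt0n size_poly_eq0.
rewrite -(prednK n_gt0) ltnS; apply/leq_sizeP => j le_j.
rewrite coefB coef_sum; under eq_bigr do rewrite coefCM coefXnM.
have [le_nj|lt_jn] := leqP n j.
  rewrite [f`_j]nth_default // sub0r big1 ?oppr0 // => i _.
  have [_|le_j'] := ltnP j (n - size (l`_i)%R); first by rewrite mulr0.
  rewrite nth_default ?mulr0 //; move: (sz_i i) le_nj le_j'.
  by rewrite /n; move: (size (l`_i)%R) (size f) => a b; lia.
have -> : j = n.-1 by lia.
apply/eqP; rewrite -lead_coefE lead_f subr_eq0; apply/eqP/eq_bigr => i _.
rewrite (nth_map 0) // lead_coefE; congr (_ * _).
have le_sz := sz_i i; have [sz0|sz_pos] := posnP (size (l`_i)%R).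
  rewrite sz0 subn0 ifT ?prednK // nth_default //.
  by rewrite sz0.
by rewrite ifF; [congr nth; lia | lia].
Qed.

Hypothesis noethR : noetherian R.

Lemma noetherian_chain_stops (T : Type) (h : T -> R) (P : seq T -> Prop)
    (next : seq T -> T) :
  P [::] -> (forall l, P l -> P (next l :: l)) ->
  exists2 l, P l & span (map h l) (h (next l)).
Proof.
move=> P0 PS; pose L m := iter m (fun l => next l :: l) [::].
have PL m : P (L m) by elim: m => //= m; apply: PS.
have [N stable] := noethR (fun m => is_ideal_span (map h (L m)))
  (fun m x => @span_cons _ _ _ x).
by exists (L N) => //; apply/(stable N.+1 (leqnSn N)); apply: span_mem; apply: mem_head.
Qed.

Lemma noetherian_ideals_fg : ideals_fg R.
Proof.
move=> I hI; apply: NNPP => not_fg.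
pose in_I (l : seq R) := forall y, y \in l -> I y.
have /functional_choice [next hnext] : forall l, exists x, in_I l -> I x /\ ~ span l x.
  move=> l; have [lI|] := classic (in_I l); last by exists 0.
  apply: NNPP => no_x; apply: not_fg; exists l => x; split; last exact: span_sub.
  by move=> Ix; apply: NNPP => nspan; apply: no_x; exists x.
have in_I_next l : in_I l -> in_I (next l :: l).
  by move=> lI y; rewrite inE => /predU1P [-> | /lI //]; have [] := hnext l lI.
have in_I_nil : in_I [::] by move=> y; rewrite in_nil.
have [l lI] := noetherian_chain_stops id in_I_nil in_I_next.
by rewrite map_id; have [_] := hnext l lI.
Qed.

(* Hilbert's basis theorem: pick each new element of minimal size outside the span of
   the previous ones; once their leading coefficients stabilise, [lead_coef_reduce]
   yields a smaller one. *)
Lemma poly_ideals_fg : ideals_fg {poly R}.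
Proof.
move=> J hJ; apply: NNPP => not_fg.
pose in_J (l : seq {poly R}) := forall y, y \in l -> J y.
pose outside l g := J g /\ ~ span l g.
have /functional_choice [next hnext] : forall l, exists f, in_J l ->
    outside l f /\ forall g, outside l g -> (size f <= size g)%N.
  move=> l; have [lJ|] := classic (in_J l); last by exists 0.
  have [|f [out_f min_f]] := ex_minimal (fun g : {poly R} => size g) (P := outside l).
    apply: NNPP => no_out; apply: not_fg; exists l => g; split; last exact: span_sub.
    by move=> Jg; apply: NNPP => ng; apply: no_out; exists g.
  by exists f.
pose P l := in_J l /\ forall f, f \in l -> forall g, outside l g -> (size f <= size g)%N.
have P_nil : P [::] by split => // y; rewrite in_nil.
have P_next l : P l -> P (next l :: l).
  move=> [lJ l_min]; have [[Jf _] min_f] := hnext l lJ.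
  have out_cons g : outside (next l :: l) g -> outside l g.
    by case=> Jg ng; split => // sg; apply: ng; apply: span_cons.
  split; first by move=> y; rewrite inE => /predU1P [-> | /lJ].
  by move=> f; rewrite inE => /predU1P [-> | lf] g /out_cons; [apply: min_f | apply: l_min].
have [l [lJ l_min] lead_span] := noetherian_chain_stops lead_coef P_nil P_next.
have [[Jf nsf] min_f] := hnext l lJ; set f := next l in Jf nsf min_f lead_span.
have nz_f : f != 0.
  by apply/eqP => f0; apply: nsf; rewrite f0; apply: ideal0 (is_ideal_span l).
have [g span_fg lt_gf] := lead_coef_reduce nz_f (fun h lh => l_min h lh f (conj Jf nsf)) lead_span.
have : outside l g.
  split; first by rewrite -[g](subKr f); apply: idealB hJ Jf (span_sub hJ lJ span_fg).
  by move=> sg; apply: nsf; rewrite -(subrK g f); apply: idealD (is_ideal_span l) span_fg sg.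
by move/min_f; rewrite leqNgt lt_gf.
Qed.

End Noetherian.

Lemma span_rmorph (R S : comNzRingType) (h : {rmorphism R -> S}) (l : seq R) x :
  span l x -> span (map h l) (h x).
Proof.
case=> c ->; exists (h \o c); rewrite size_map rmorph_sum; apply: eq_bigr => i _.
by rewrite rmorphM (nth_map 0).
Qed.

Lemma is_ideal_preim (R S : comNzRingType) (h : {rmorphism S -> R}) (I : R -> Prop) :
  is_ideal I -> is_ideal (fun y => I (h y)).
Proof.
move=> hI; split; first by rewrite rmorph0; apply: ideal0.
- by move=> x y hx hy; rewrite rmorphD; apply: idealD.
- by move=> a x hx; rewrite rmorphM; apply: idealMl.
Qed.

Section Module.
Variables (R : comNzRingType) (n : nat) (e : 'M[R]_n).
Implicit Types (f g : 'cV[R]_n) (p q : 'rV[R]_n).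

Lemma inP0 : inP e 0. Proof. by rewrite /inP mul0mx. Qed.

Lemma inPD p q : inP e p -> inP e q -> inP e (p + q).
Proof. by rewrite /inP mulmxDl => -> ->. Qed.

Lemma inPZ a p : inP e p -> inP e (a *: p).
Proof. by rewrite /inP -scalemxAl => ->. Qed.

Lemma inPB p q : inP e p -> inP e q -> inP e (p - q).
Proof. by move=> hp hq; rewrite -scaleN1r; apply/inPD/inPZ. Qed.

Lemma inPdualD f g : inPdual e f -> inPdual e g -> inPdual e (f + g).
Proof. by rewrite /inPdual mulmxDr => -> ->. Qed.

Lemma inPdualZ a f : inPdual e f -> inPdual e (a *: f).
Proof. by rewrite /inPdual -scalemxAr => ->. Qed.

Lemma inPdualB f g : inPdual e f -> inPdual e g -> inPdual e (f - g).
Proof. by rewrite /inPdual mulmxBr => -> ->. Qed.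

Lemma inP_row i : e *m e = e -> inP e (row i e).
Proof. by rewrite /inP -row_mul => ->. Qed.

Lemma ev0 f : ev f 0 = 0. Proof. by rewrite /ev mul0mx mxE. Qed.

Lemma evD f p q : ev f (p + q) = ev f p + ev f q.
Proof. by rewrite /ev mulmxDl mxE. Qed.

Lemma evZ f a p : ev f (a *: p) = a * ev f p.
Proof. by rewrite /ev -scalemxAl mxE. Qed.

Lemma evB f p q : ev f (p - q) = ev f p - ev f q.
Proof. by rewrite evD -scaleN1r evZ mulN1r. Qed.

Lemma evfD f g p : ev (f + g) p = ev f p + ev g p.
Proof. by rewrite /ev mulmxDr mxE. Qed.

Lemma evfZ f a p : ev (a *: f) p = a * ev f p.
Proof. by rewrite /ev -scalemxAr mxE. Qed.

Lemma evfB f g p : ev (f - g) p = ev f p - ev g p.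
Proof. by rewrite evfD -scaleN1r evfZ mulN1r. Qed.

Lemma ev_rows f p : inP e p -> ev f p = \sum_i p 0 i * ev f (row i e).
Proof.
rewrite /inP => ep; rewrite -{1}ep mulmx_sum_row /ev mulmx_suml summxE.
by apply: eq_bigr => i _; rewrite -scalemxAl mxE.
Qed.

Lemma is_ideal_imP f : is_ideal (imP e f).
Proof.
split; first by exists 0; split; [exact: inP0 | rewrite ev0].
- by move=> _ _ [p [hp ->]] [q [hq ->]]; exists (p + q); rewrite evD; split => //; apply: inPD.
- by move=> a _ [p [hp ->]]; exists (a *: p); rewrite evZ; split => //; apply: inPZ.
Qed.

Definition eta_ideal f s : R -> Prop := (eta'_map e (f, s)).1.

Lemma is_ideal_eta_ideal f s : is_ideal (eta_ideal f s).
Proof.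
split; first by exists 0, 0; rewrite ev0 mul0r addr0; split => //; apply: inP0.
- move=> _ _ [p [b [hp ->]]] [q [c [hq ->]]]; exists (p + q), (b + c).
  by split; [apply: inPD | rewrite evD mulrDl addrACA].
- move=> a _ [p [b [hp ->]]]; exists (a *: p), (a * b).
  by split; [apply: inPZ | rewrite evZ mulrDr mulrA].
Qed.

Lemma imP_eta_ideal f s x : imP e f x -> eta_ideal f s x.
Proof. by case=> p [hp ->]; exists p, 0; rewrite mul0r addr0. Qed.

Lemma eta_ideal_s f s : eta_ideal f s s.
Proof. by exists 0, 1; rewrite ev0 add0r mul1r; split => //; apply: inP0. Qed.

Definition eta_gens f s : seq R := s :: [seq ev f (row i e) | i <- enum 'I_n].

Lemma eta_ideal_span f s x : eta_ideal f s x -> span (eta_gens f s) x.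
Proof.
have gen_span y : y \in eta_gens f s -> span (eta_gens f s) y by apply: span_mem.
case=> p [b [hp ->]]; rewrite (ev_rows f hp).
apply: idealD (is_ideal_span _) _ _; last first.
  by apply: idealMl (is_ideal_span _) (gen_span _ (mem_head _ _)).
apply: ideal_sum (is_ideal_span _) _ => i _; apply: idealMl (is_ideal_span _) (gen_span _ _).
by rewrite inE; apply/orP; right; apply: map_f; rewrite mem_enum.
Qed.

Definition one_mod_image f (J : R -> Prop) s := forall x, J x -> imP e f ((1 - s) * x).

End Module.

Section BaseChange.
Variables (R : comNzRingType) (n : nat) (e : 'M[R]_n).
Implicit Types (f : 'cV[R]_n) (p : 'rV[R]_n) (F : 'cV[{poly R}]_n) (t : R).

Definition polyC_rV p : 'rV[{poly R}]_n := map_mx polyC p.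
Definition polyC_cV f : 'cV[{poly R}]_n := map_mx polyC f.

Lemma spec_polyC_rV t p : spec_rV t (polyC_rV p) = p.
Proof. by apply/matrixP => i j; rewrite !mxE hornerC. Qed.

Lemma spec_polyC_cV t f : spec_cV t (polyC_cV f) = f.
Proof. by apply/matrixP => i j; rewrite !mxE hornerC. Qed.

Lemma ev_polyC f p : ev (polyC_cV f) (polyC_rV p) = (ev f p)%:P.
Proof. by rewrite /ev -map_mxM mxE. Qed.

Lemma inP_polyC p : inP e p -> inP (eT e) (polyC_rV p).
Proof. by rewrite /inP /eT /polyC_rV -map_mxM => ->. Qed.

Lemma inPdual_polyC f : inPdual e f -> inPdual (eT e) (polyC_cV f).
Proof. by rewrite /inPdual /eT /polyC_cV -map_mxM => ->. Qed.

Lemma spec_rVE t (P : 'rV[{poly R}]_n) : spec_rV t P = map_mx (horner_eval t) P.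
Proof. by []. Qed.

Lemma spec_cVE t F : spec_cV t F = map_mx (horner_eval t) F.
Proof. by []. Qed.

Lemma ev_spec t F (P : 'rV[{poly R}]_n) : ev (spec_cV t F) (spec_rV t P) = (ev F P).[t].
Proof. by rewrite /ev spec_rVE spec_cVE -map_mxM mxE. Qed.

Lemma eT_spec t : map_mx (horner_eval t) (eT e) = e.
Proof. by apply/matrixP => i j; rewrite !mxE horner_evalE hornerC. Qed.

Lemma inP_spec t (P : 'rV[{poly R}]_n) : inP (eT e) P -> inP e (spec_rV t P).
Proof. by rewrite /inP spec_rVE => eP; rewrite -{1}(eT_spec t) -map_mxM eP. Qed.

Lemma inPdual_spec t F : inPdual (eT e) F -> inPdual e (spec_cV t F).
Proof. by rewrite /inPdual spec_cVE => eF; rewrite -{1}(eT_spec t) -map_mxM eF. Qed.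

Lemma spec_segment t f g : spec_cV t (polyC_cV f + 'X *: polyC_cV (g - f)) = f + t *: (g - f).
Proof.
by rewrite spec_cVE map_mxD map_mxZ /= -!spec_cVE !spec_polyC_cV horner_evalE hornerX.
Qed.

Lemma inQc_spec t H : inQc (eT e) H -> inQc e (spec_Qc t H).
Proof.
case: H => F S [hF [P [hP FP]]]; split; first exact: inPdual_spec.
exists (spec_rV t P); split; first exact: inP_spec.
by rewrite ev_spec FP -!horner_evalE rmorphM rmorphB rmorph1.
Qed.

Lemma inQt_spec t H : inQt (eT e) H -> inQt e (spec_Qt t H).
Proof.
case: H => [[F P] S] [hF hP FP]; split; [exact: inPdual_spec | exact: inP_spec |].
move/(congr1 (horner_eval t)): FP.
by rewrite rmorph0 rmorphD rmorphM rmorphB rmorph1 /= ev_spec.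
Qed.

End BaseChange.

Section Closure.
Variables (X : Type) (G : relation X).

Lemma clos_rst_mem_iff (M : X -> Prop) : (forall x y, G x y -> M x /\ M y) ->
  forall x y, clos_refl_sym_trans X G x y -> (M x <-> M y).
Proof.
move=> GM x y; elim=> {x y} [x y /GM [] //|//|x y _ [] //|].
by move=> x y z _ [xy yx] _ [yz zy]; split => ?; [apply/yz/xy | apply/yx/zy].
Qed.

Lemma clos_rst_map (Y : Type) (H : relation Y) (g : X -> Y) :
  (forall x y, G x y -> clos_refl_sym_trans Y H (g x) (g y)) ->
  forall x y, clos_refl_sym_trans X G x y -> clos_refl_sym_trans Y H (g x) (g y).
Proof.
move=> Gg x y; elim=> {x y} [x y /Gg //|x|x y _|x y z _ xy _ yz].
- exact: rst_refl.
- exact: rst_sym.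
- exact: rst_trans xy yz.
Qed.

End Closure.

Section Orientation.
Variables (R : comNzRingType) (n : nat) (e : 'M[R]_n).
Implicit Types (f g : 'cV[R]_n) (p : 'rV[R]_n) (J : R -> Prop) (q : 'cV[R]_n * R).

Lemma htpy_Qc_step H : inQc (eT e) H -> htpy_Qc e (spec_Qc 0 H) (spec_Qc 1 H).
Proof. by move=> hH; apply: rst_step; exists H. Qed.

(* The path [s + T d] stays in [Q(P[T])]:
   [S (1 - S) = s (1 - s) + T (1 - 2 s) d - T^2 d^2]. *)
Lemma htpy_Qc_translate f s d : inQc e (f, s) -> imP e f d -> htpy_Qc e (f, s) (f, s + d).
Proof.
case=> hf [p0 [hp0 fp0]] [q0 [hq0 fq0]].
pose S : {poly R} := s%:P + 'X * d%:P.
pose P := polyC_rV p0 + ('X * (1 - 2%:R * s)%:P - 'X^2 * d%:P) *: polyC_rV q0.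
have hS : inQc (eT e) (polyC_cV f, S).
  split; first exact: inPdual_polyC.
  exists P; split; first by apply: inPD; [|apply: inPZ]; apply: inP_polyC.
  rewrite evD evZ !ev_polyC fp0 -fq0 /S.
  rewrite !(polyCM, polyCB, polyC1, polyCD, polyCN, polyCMn); ring.
by have := htpy_Qc_step hS; rewrite /spec_Qc !spec_polyC_cV /S !hornerE.
Qed.

Lemma htpy_Qc_one_mod f J s s' : inPdual e f -> J s -> J s' ->
  one_mod_image e f J s -> one_mod_image e f J s' -> htpy_Qc e (f, s) (f, s').
Proof.
move=> hf Js Js' one_s one_s'.
have hQ : inQc e (f, s).
  by split => //; have [p [hp eq]] := one_s s Js; exists p; rewrite -eq mulrC.
have d_im : imP e f (s' - s).
  rewrite (_ : s' - s = (1 - s) * s' - (1 - s') * s); last by ring.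
  exact: idealB (is_ideal_imP e f) (one_s _ Js') (one_s' _ Js).
by have := htpy_Qc_translate hQ d_im; rewrite subrKC.
Qed.

Lemma one_mod_eta_ideal f s : inQc e (f, s) -> one_mod_image e f (eta_ideal e f s) s.
Proof.
case=> hf [p0 [hp0 fp0]] _ [p [b [hp ->]]].
exists ((1 - s) *: p + b *: p0); split; first by apply: inPD; apply: inPZ.
by rewrite evD !evZ fp0; ring.
Qed.

Lemma chi_rep_inQc x q : chi_rep e x q -> inQc e q.
Proof. by case: x q => J0 f0 [f s] []. Qed.

Lemma chi_rep_ideal J0 f0 q : chi_rep e (J0, f0) q -> is_ideal J0.
Proof.
case: q => f s [_ _ _ J_eta].
by apply: is_ideal_same (is_ideal_eta_ideal e f s) => y; split => /J_eta.
Qed.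

Lemma chi_rep_one_mod J0 f0 f s : chi_rep e (J0, f0) (f, s) -> one_mod_image e f J0 s.
Proof. by case=> hQ _ _ J_eta y /J_eta; apply: one_mod_eta_ideal. Qed.

Lemma chi_exists x : ideals_fg R -> inLO e x -> exists q, chi_rep e x q.
Proof.
case: x => J f fgR [hJ hf fJ f_onto].
have [l Jl] := fgR J hJ.
have [s ls one_s] : exists2 s, span l s & one_mod_image e f (span l) s.
  apply: nakayama (is_ideal_imP e f) _ => y /span_mem /Jl /f_onto [p [hp sq]].
  by exists (ev f p); [exists p | apply: ideal_sq_same Jl sq].
exists (f, s); split.
- by split => //; have [p [hp eq]] := one_s s ls; exists p; rewrite -eq mulrC.
- by move=> p hp; rewrite subrr; split; [apply: fJ | apply: ideal_sq0].
- exact/Jl.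
- move=> a; split.
    by move=> /Jl /one_s [p [hp eq]]; exists p, a; split => //; rewrite -eq; ring.
  by case=> p [b [hp ->]]; apply: idealD hJ (fJ _ hp) (idealMl _ hJ _); apply/Jl.
Qed.

Hypothesis idem_e : e *m e = e.

Lemma chi_rep_segment J0 f0 f s g : chi_rep e (J0, f0) (f, s) -> inPdual e g ->
    (forall p, inP e p -> ideal_sq J0 (ev g p - ev f p)) ->
  exists S : {poly R}, inQc (eT e) (polyC_cV f + 'X *: polyC_cV (g - f), S) /\
    forall t, J0 S.[t] /\ one_mod_image e (f + t *: (g - f)) J0 S.[t].
Proof.
move=> chi_fs hg dJ2; have hJ := chi_rep_ideal chi_fs.
have [[hf [p0 [hp0 fp0]]] f_lift Js J_eta] := chi_fs.
set F := polyC_cV f + 'X *: polyC_cV (g - f).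
set l := map polyC (eta_gens e f s).
have J_l a : J0 a -> span l a%:P by move=> /J_eta /eta_ideal_span; apply: span_rmorph.
have F_lift p : inP e p -> ideal_sq (span l) ((ev f p)%:P - ev F (polyC_rV p)).
  move=> hp; rewrite evfD evfZ !ev_polyC evfB opprD addrA subrr add0r.
  apply: idealN (is_ideal_sq (is_ideal_span l)) _.
  apply: idealMl (is_ideal_sq (is_ideal_span l)) _.
  exact: ideal_sq_rmorph J_l (dJ2 p hp).
have [S lS one_S] : exists2 S, span l S & one_mod_image (eT e) F (span l) S.
  apply: nakayama (is_ideal_imP _ F) _ => _ /mapP [a + ->].
  rewrite inE => /predU1P [-> | /mapP [i _ ->]].
    exists (ev F (polyC_rV p0)); first by exists (polyC_rV p0); split => //; apply: inP_polyC.
    rewrite (_ : s%:P - _ = ((ev f p0)%:P - ev F (polyC_rV p0)) + s%:P * s%:P); last first.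
      by rewrite fp0 polyCM polyCB polyC1; ring.
    exact: idealD (is_ideal_sq (is_ideal_span l)) (F_lift _ hp0) (ideal_sqM (J_l _ Js) (J_l _ Js)).
  have hei := inP_row i idem_e.
  exists (ev F (polyC_rV (row i e))); last exact: F_lift.
  by exists (polyC_rV (row i e)); split => //; apply: inP_polyC.
exists S; split.
  split.
    apply: inPdualD; first exact: inPdual_polyC.
    by apply/inPdualZ/inPdual_polyC; apply: inPdualB.
  by have [P [hP eq]] := one_S S lS; exists P; rewrite -eq mulrC.
move=> t; split.
  apply: (span_sub (is_ideal_preim (horner_eval t) hJ)) lS => _ /mapP [a + ->].
  rewrite /= /horner_eval hornerC inE => /predU1P [-> // | /mapP [i _ ->]].
  exact: (f_lift _ (inP_row i idem_e)).1.
move=> y Jy; have [P [hP eq]] := one_S _ (J_l _ Jy).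
exists (spec_rV t P); split; first exact: inP_spec.
by rewrite -(spec_segment t) ev_spec -eq hornerM hornerD hornerN !hornerC.
Qed.

Lemma chi_unique x q q' : chi_rep e x q -> chi_rep e x q' -> htpy_Qc e q q'.
Proof.
case: x q q' => [J0 f0] [f s] [g t] chi_fs chi_gt.
have hJ := chi_rep_ideal chi_fs.
have [[hf _] f_lift Js _] := chi_fs; have [[hg _] g_lift Jt _] := chi_gt.
have dJ2 p : inP e p -> ideal_sq J0 (ev g p - ev f p).
  move=> hp; rewrite (_ : _ - _ = (ev g p - ev f0 p) - (ev f p - ev f0 p)); last by ring.
  exact: idealB (is_ideal_sq hJ) (g_lift p hp).2 (f_lift p hp).2.
have [S [hS S_t]] := chi_rep_segment chi_fs hg dJ2.
have [JS0 one_S0] := S_t 0; have [JS1 one_S1] := S_t 1.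
rewrite scale0r addr0 in one_S0; rewrite scale1r subrKC in one_S1.
apply: rst_trans (htpy_Qc_one_mod hf Js JS0 (chi_rep_one_mod chi_fs) one_S0) _.
apply: rst_trans (htpy_Qc_one_mod hg JS1 Jt one_S1 (chi_rep_one_mod chi_gt)).
by have := htpy_Qc_step hS; rewrite /spec_Qc !spec_segment scale0r addr0 scale1r subrKC.
Qed.

End Orientation.

Section Transfer.
Variables (R : comNzRingType) (n : nat) (e : 'M[R]_n).
Implicit Types (f : 'cV[R]_n) (p : 'rV[R]_n) (x : (R -> Prop) * 'cV[R]_n) (q : 'cV[R]_n * R).

Lemma inLO_same J J' f : same_set J J' -> inLO e (J, f) -> inLO e (J', f).
Proof.
move=> JJ' [hJ hf fJ f_onto]; split => //.
- exact: is_ideal_same JJ' hJ.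
- by move=> p hp; apply/JJ'/fJ.
- by move=> a /JJ' /f_onto [p [hp sq]]; exists p; split => //; apply: ideal_sq_same JJ' sq.
Qed.

Lemma inLO_eta' q : inQc e q -> inLO e (eta'_map e q).
Proof.
case: q => f s [hf [p0 [hp0 fp0]]]; have hJ := is_ideal_eta_ideal e f s.
split => //; first by move=> p hp; apply: imP_eta_ideal; exists p.
move=> _ [p [b [hp ->]]]; exists (p + b *: p0); split; first by apply: inPD => //; apply: inPZ.
rewrite evD evZ fp0 (_ : _ - _ = (b * s) * s); last by ring.
by apply: ideal_sqM; [apply: idealMl hJ _ |]; apply: eta_ideal_s.
Qed.

Lemma eta'_chi_rep q : inQc e q -> chi_rep e (eta'_map e q) q.
Proof.
case: q => f s hQ; split => //; last exact: eta_ideal_s.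
by move=> p hp; rewrite subrr; split; [apply: imP_eta_ideal; exists p | apply: ideal_sq0].
Qed.

Lemma chi_rep_same_LO x y q : same_LO e x y -> chi_rep e y q -> chi_rep e x q.
Proof.
case: x y q => [J1 f1] [J2 f2] [f s] [[hJ1 _ _ _] [_ [/= J12 /= f12]]] [hQ f_lift Js J_eta].
split => //.
- move=> p hp; have [Jf sq] := f_lift p hp; split; first exact/J12.
  rewrite (_ : _ - _ = (ev f p - ev f2 p) - (ev f1 p - ev f2 p)); last by ring.
  apply: idealB (is_ideal_sq hJ1) _ (f12 p hp).
  by apply: ideal_sq_same sq => y; split => /J12.
- exact/J12.
- by move=> y; split => [/J12 /J_eta | /J_eta /J12].
Qed.

Lemma same_LO_eta'_chi x q : chi_rep e x q -> inLO e x -> same_LO e (eta'_map e q) x.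
Proof.
move=> cq hx; split; first exact/inLO_eta'/(chi_rep_inQc cq).
split => //; case: x cq {hx} => J0 f0; case: q => f s [_ f_lift _ J_eta] /=.
split; first by move=> y; split => /J_eta.
by move=> p hp; have [_ sq] := f_lift p hp; apply: ideal_sq_same sq => y; split => /J_eta.
Qed.

Lemma htpy_LO_eta'_chi x q : chi_rep e x q -> inLO e x -> htpy_LO e (eta'_map e q) x.
Proof. by move=> cq hx; apply: rst_step; left; apply: same_LO_eta'_chi. Qed.

Lemma spec_eta_ideal t F S :
  same_set (spec_ideal t (eta_ideal (eT e) F S)) (eta_ideal e (spec_cV t F) S.[t]).
Proof.
move=> x; split.
  case=> _ [[P [b [hP ->]]] ->]; exists (spec_rV t P), b.[t].
  by rewrite hornerD hornerM ev_spec; split => //; apply: inP_spec.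
case=> p [b [hp ->]]; exists (ev F (polyC_rV p) + b%:P * S); split.
  by exists (polyC_rV p), b%:P; split => //; apply: inP_polyC.
by rewrite hornerD hornerM hornerC -ev_spec spec_polyC_rV.
Qed.

Lemma chi_rep_spec t H Q : chi_rep (eT e) H Q -> chi_rep e (spec_LO t H) (spec_Qc t Q).
Proof.
case: H Q => J F0 [F S] cQ; have [hQ F_lift JS J_eta] := cQ.
split; first exact: (inQc_spec t hQ).
- move=> p hp; have [JF sq] := F_lift _ (inP_polyC hp); split.
    by exists (ev F (polyC_rV p)); rewrite -ev_spec spec_polyC_rV.
  have J_spec y : J y -> spec_ideal t J (horner_eval t y) by exists y.
  have := ideal_sq_rmorph J_spec sq.
  by rewrite /= /horner_eval hornerD hornerN -!ev_spec !spec_polyC_rV.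
- by exists S.
- move=> x; split.
    by case=> y [/J_eta Jy ->]; apply/(spec_eta_ideal t F S); exists y.
  by move/(spec_eta_ideal t F S) => [y [Jy ->]]; exists y; split => //; apply/J_eta.
Qed.

Lemma same_LO_eta'_spec t H : inQc (eT e) H ->
  same_LO e (eta'_map e (spec_Qc t H)) (spec_LO t (eta'_map (eT e) H)).
Proof.
case: H => F S hH; have hL := inLO_eta' (inQc_spec t hH).
have J_spec y : (eta'_map e (spec_Qc t (F, S))).1 y <-> (spec_LO t (eta'_map (eT e) (F, S))).1 y.
  by have [JS SJ] := spec_eta_ideal t F S y; split => [/SJ | /JS].
do 2 split => //; first exact: inLO_same J_spec hL.
by split => // p hp /=; rewrite subrr; apply: ideal_sq0.
Qed.

End Transfer.

Definition kappa_inv (R : comNzRingType) (n : nat) (c : R) (x : 'cV[R]_n * 'rV[R]_n * R)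
    : 'cV[R]_n * 'rV[R]_n * R :=
  let: (f, p, z) := x in (c *: f, c *: p, c * (z + 1)).

Section Maps.
Variables (R : comNzRingType) (n : nat) (e : 'M[R]_n).
Implicit Types (x : 'cV[R]_n * 'rV[R]_n * R).

Lemma inQc_nu x : inQt e x -> inQc e (nu_map x).
Proof.
case: x => [[f p] s] [hf hp fp]; split => //; exists p; split => //.
by apply/eqP; rewrite -subr_eq0 -fp; apply/eqP; ring.
Qed.

Lemma nu_surj u : inQc e u -> exists2 x, inQt e x & nu_map x = u.
Proof.
by case: u => f s [hf [p [hp fp]]]; exists (f, p, s) => //; split => //; rewrite fp; ring.
Qed.

Lemma nu_spec t (H : 'cV[{poly R}]_n * 'rV[{poly R}]_n * {poly R}) :
  nu_map (spec_Qt t H) = spec_Qc t (nu_map H).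
Proof. by case: H => [[F P] S]. Qed.

Lemma inQt'_kappa x : inQt e x -> inQt' e (kappa_map x).
Proof.
case: x => [[f p] s] [hf hp fp]; split; [exact: inPdualZ | exact: inPZ |].
rewrite evZ evfZ (_ : ev f p = - (s * (s - 1))); last by apply/eqP; rewrite -addr_eq0 fp.
by ring.
Qed.

Lemma inQt_kappa_inv c x : c * 2%:R = 1 -> inQt' e x -> inQt e (kappa_inv c x).
Proof.
move=> c2; case: x => [[f p] z] [hf hp fp]; split; [exact: inPdualZ | exact: inPZ |].
rewrite evZ evfZ (_ : ev f p = 1 - z ^+ 2); last by rewrite -fp addrK.
rewrite (_ : _ + _ = (z + 1) * c * (c * 2%:R - 1)); last by ring.
by rewrite c2 subrr mulr0.
Qed.

Lemma kappa_invK c x : c * 2%:R = 1 -> kappa_inv c (kappa_map x) = x.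
Proof.
by move=> c2; case: x => [[f p] s] /=; rewrite !scalerA c2 !scale1r subrK mulrA c2 mul1r.
Qed.

Lemma kappaK c x : c * 2%:R = 1 -> kappa_map (kappa_inv c x) = x.
Proof.
move=> c2; case: x => [[f p] z] /=; have c2' : 2%:R * c = 1 by rewrite mulrC.
by rewrite !scalerA c2' !scale1r mulrA c2' mul1r addrK.
Qed.

Lemma kappa_spec t (H : 'cV[{poly R}]_n * 'rV[{poly R}]_n * {poly R}) :
  spec_Qt t (kappa_map H) = kappa_map (spec_Qt t H).
Proof.
case: H => [[F P] S] /=.
rewrite spec_cVE spec_rVE !map_mxZ -spec_cVE -spec_rVE rmorph_nat.
by rewrite -horner_evalE rmorphB rmorphM rmorph_nat rmorph1.
Qed.

Lemma kappa_inv_spec c t (H : 'cV[{poly R}]_n * 'rV[{poly R}]_n * {poly R}) :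
  spec_Qt t (kappa_inv c%:P H) = kappa_inv c (spec_Qt t H).
Proof.
case: H => [[F P] S] /=; rewrite spec_cVE spec_rVE !map_mxZ -spec_cVE -spec_rVE /=.
by rewrite horner_evalE hornerC hornerM hornerD !hornerC.
Qed.

End Maps.

Section Homotopies.
Variables (R : comNzRingType) (n : nat) (e : 'M[R]_n).
Implicit Types (x y : (R -> Prop) * 'cV[R]_n) (q u v : 'cV[R]_n * R)
  (z w : 'cV[R]_n * 'rV[R]_n * R).

Lemma htpy_LO_mem x y : htpy_LO e x y -> inLO e x <-> inLO e y.
Proof.
apply: (clos_rst_mem_iff (M := inLO e)) => {}x {}y.
by case=> [[hx [hy _]] | [H [_ [[hx _] [hy _]]]]].
Qed.

Lemma htpy_Qc_mem u v : htpy_Qc e u v -> inQc e u <-> inQc e v.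
Proof.
apply: (clos_rst_mem_iff (M := inQc e)) => _ _ [H [hH [-> ->]]].
by split; apply: inQc_spec.
Qed.

Lemma htpy_eta' q q' : htpy_Qc e q q' -> htpy_LO e (eta'_map e q) (eta'_map e q').
Proof.
apply: (clos_rst_map (g := eta'_map e)) => _ _ [H [hH [-> ->]]].
apply: rst_step; right; exists (eta'_map (eT e) H).
by split; [apply: inLO_eta' | split; apply: same_LO_eta'_spec].
Qed.

Lemma htpy_nu z z' : htpy_Qt e z z' -> htpy_Qc e (nu_map z) (nu_map z').
Proof.
apply: (clos_rst_map (g := @nu_map R n)) => _ _ [H [hH [-> ->]]].
by rewrite !nu_spec; apply/htpy_Qc_step/inQc_nu.
Qed.

Lemma htpy_kappa z z' : htpy_Qt e z z' -> htpy_Qt' e (kappa_map z) (kappa_map z').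
Proof.
apply: (clos_rst_map (g := @kappa_map R n)) => _ _ [H [hH [-> ->]]].
by apply: rst_step; exists (kappa_map H); rewrite !kappa_spec; split => //; apply: inQt'_kappa.
Qed.

Lemma htpy_kappa_inv c w w' : c * 2%:R = 1 ->
  htpy_Qt' e w w' -> htpy_Qt e (kappa_inv c w) (kappa_inv c w').
Proof.
move=> c2; apply: (clos_rst_map (g := kappa_inv c)) => _ _ [H [hH [-> ->]]].
apply: rst_step; exists (kappa_inv c%:P H); rewrite !kappa_inv_spec; split => //.
by apply: inQt_kappa_inv hH; rewrite mulr_natr -polyCMn -mulr_natr c2.
Qed.

Lemma htpy_Qt_nu_fibre z z' : inQt e z -> inQt e z' -> nu_map z = nu_map z' ->
  htpy_Qt e z z'.
Proof.
case: z z' => [[f p] s] [[f' p'] s'] [hf hp fp] [_ hp' fp'] [ff' ss']; subst f' s'.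
have ev_p' : ev f p' = ev f p by apply: (addIr (s * (s - 1))); rewrite fp fp'.
apply: rst_step; exists (polyC_cV f, polyC_rV p + 'X *: polyC_rV (p' - p), s%:P); split.
  split; first exact: inPdual_polyC.
    by apply: inPD; [|apply: inPZ]; apply: inP_polyC => //; apply: inPB.
  rewrite evD evZ !ev_polyC evB ev_p' subrr mulr0 addr0.
  by rewrite -polyC1 -polyCB -polyCM -polyCD fp.
rewrite /spec_Qt !spec_polyC_cV !hornerC !spec_rVE !(map_mxD, map_mxZ) /= -!spec_rVE.
by rewrite !spec_polyC_rV !horner_evalE !hornerX scale0r scale1r addr0 subrKC.
Qed.

Lemma htpy_Qt_of_nu u v : htpy_Qc e u v -> forall z z', inQt e z -> inQt e z' ->
  nu_map z = u -> nu_map z' = v -> htpy_Qt e z z'.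
Proof.
elim=> {u v}.
- move=> _ _ [H [hH [-> ->]]] z z' hz hz' nu_z nu_z'.
  have [Ht hHt nu_Ht] := nu_surj hH.
  have nu_spec_Ht t : nu_map (spec_Qt t Ht) = spec_Qc t H by rewrite nu_spec nu_Ht.
  apply: (rst_trans _ _ _ (spec_Qt 0 Ht)).
    by apply: htpy_Qt_nu_fibre hz (inQt_spec 0 hHt) _; rewrite nu_spec_Ht.
  apply: (rst_trans _ _ _ (spec_Qt 1 Ht)); first by apply: rst_step; exists Ht.
  by apply: htpy_Qt_nu_fibre (inQt_spec 1 hHt) hz' _; rewrite nu_spec_Ht.
- by move=> u z z' hz hz' <- nu_z'; apply: htpy_Qt_nu_fibre.
- by move=> u v _ IH z z' hz hz' nu_z nu_z'; apply/rst_sym/IH.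
move=> u w v uw IH1 _ IH2 z z' hz hz' nu_z nu_z'.
have hw : inQc e w by apply/(htpy_Qc_mem uw); rewrite -nu_z; apply: inQc_nu.
have [zw hzw nu_zw] := nu_surj hw.
exact: rst_trans (IH1 _ _ hz hzw nu_z nu_zw) (IH2 _ _ hzw hz' nu_zw nu_z').
Qed.

Hypothesis idem_e : e *m e = e.

Lemma chi_wd x y q q' : ideals_fg R -> ideals_fg {poly R} -> inLO e x ->
  htpy_LO e x y -> chi_rep e x q -> chi_rep e y q' -> htpy_Qc e q q'.
Proof.
move=> fgR fgT hx xy; elim: xy q q' hx => {x y}.
- move=> x y [xy | [H [hH [x0 y1]]]] q q' _ cq cq'.
    exact: (chi_unique idem_e cq (chi_rep_same_LO xy cq')).
  have [Q cQ] := chi_exists fgT hH.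
  apply: rst_trans (chi_unique idem_e cq (chi_rep_same_LO x0 (chi_rep_spec 0 cQ))) _.
  apply: rst_trans (htpy_Qc_step (chi_rep_inQc cQ)) _.
  exact: (chi_unique idem_e (chi_rep_same_LO y1 (chi_rep_spec 1 cQ)) cq').
- by move=> x q q' _; apply: chi_unique.
- move=> x y yx IH q q' hx cq cq'; apply/rst_sym/IH => //.
  exact/(htpy_LO_mem yx).
move=> x y z xy IH1 _ IH2 q q' hx cq cq'.
have hy := (htpy_LO_mem xy).1 hx; have [r cr] := chi_exists fgR hy.
exact: rst_trans (IH1 _ _ hx cq cr) (IH2 _ _ hy cr cq').
Qed.

End Homotopies.

Lemma induces_bij_comp (X Y Z : Type) (memX : X -> Prop) (memY : Y -> Prop)
    (memZ : Z -> Prop) (RX : relation X) (RY : relation Y) (RZ : relation Z)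
    (g : X -> Y) (h : Y -> Z) :
  transitive Z RZ -> induces_bij memX memY RX RY g -> induces_bij memY memZ RY RZ h ->
  induces_bij memX memZ RX RZ (fun x => h (g x)).
Proof.
move=> trZ [gXY gR gR' g_onto] [hYZ hR hR' h_onto]; split.
- by move=> x /gXY /hYZ.
- by move=> x x' hx hx' /(gR _ _ hx hx'); apply: hR; apply: gXY.
- by move=> x x' hx hx' /(hR' _ _ (gXY _ hx) (gXY _ hx')); apply: gR'.
- move=> z /h_onto [y [hy yz]]; have [x [hx xy]] := g_onto y hy.
  by exists x; split => //; apply: trZ (hR _ _ (gXY _ hx) hy xy) yz.
Qed.

Section Bijections.
Variables (R : comNzRingType) (n : nat) (e : 'M[R]_n).
Hypotheses (idem_e : e *m e = e) (fgR : ideals_fg R) (fgT : ideals_fg {poly R}).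

Lemma eta'_bij : induces_bij (inQc e) (inLO e) (htpy_Qc e) (htpy_LO e) (eta'_map e).
Proof.
split.
- exact: inLO_eta'.
- by move=> q q' _ _; apply: htpy_eta'.
- move=> q q' hq hq' qq'.
  exact: (chi_wd idem_e fgR fgT (inLO_eta' hq) qq' (eta'_chi_rep hq) (eta'_chi_rep hq')).
- move=> x hx; have [q cq] := chi_exists fgR hx.
  by exists q; split; [apply: chi_rep_inQc cq | apply: htpy_LO_eta'_chi].
Qed.

Lemma nu_bij : induces_bij (inQt e) (inQc e) (htpy_Qt e) (htpy_Qc e) (@nu_map R n).
Proof.
split.
- exact: inQc_nu.
- by move=> z z' _ _; apply: htpy_nu.
- by move=> z z' hz hz' /htpy_Qt_of_nu; apply.
- by move=> u /nu_surj [z hz <-]; exists z; split => //; apply: rst_refl.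
Qed.

Lemma eta_bij : induces_bij (inQt e) (inLO e) (htpy_Qt e) (htpy_LO e) (eta_map e).
Proof. exact: induces_bij_comp (rst_trans _ _) nu_bij eta'_bij. Qed.

End Bijections.

Lemma kappa_bij (R : comNzRingType) (n : nat) (e : 'M[R]_n) (c : R) : c * 2%:R = 1 ->
  induces_bij (inQt e) (inQt' e) (htpy_Qt e) (htpy_Qt' e) (@kappa_map R n).
Proof.
move=> c2; split.
- exact: inQt'_kappa.
- by move=> z z' _ _; apply: htpy_kappa.
- by move=> z z' _ _ /(htpy_kappa_inv c2); rewrite !kappa_invK.
- move=> w hw; exists (kappa_inv c w); split; first exact: inQt_kappa_inv.
  by rewrite kappaK //; apply: rst_refl.
Qed.

Theorem lemma2p8 (A : comNzRingType) (k : fieldType) (phi : {rmorphism k -> A})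
  (h2 : (2%:R : k) != 0) (hA : noetherian A)
  (n : nat) (e : 'M[A]_n) (he : e *m e = e) :
  (* chi is defined: admissible choices exist *)
  (forall x, inLO e x -> exists q, chi_rep e x q) /\
  (* chi induces a well-defined map chibar on pi_0(LO(P)) *)
  (forall x y q q', inLO e x -> inLO e y -> htpy_LO e x y ->
     chi_rep e x q -> chi_rep e y q' -> htpy_Qc e q q') /\
  (* eta' induces a well-defined map on pi_0(Q(P)) *)
  (forall q, inQc e q -> inLO e (eta'_map e q)) /\
  (forall q q', inQc e q -> inQc e q' -> htpy_Qc e q q' ->
     htpy_LO e (eta'_map e q) (eta'_map e q')) /\
  (* eta'bar o chibar = id *)
  (forall x q, inLO e x -> chi_rep e x q -> htpy_LO e (eta'_map e q) x) /\
  (* chibar o eta'bar = id *)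
  (forall q q', inQc e q -> chi_rep e (eta'_map e q) q' -> htpy_Qc e q' q) /\
  (* hence chibar is a bijection; and the other induced maps are bijections *)
  induces_bij (inQt e) (inLO e) (htpy_Qt e) (htpy_LO e) (eta_map e) /\
  induces_bij (inQc e) (inLO e) (htpy_Qc e) (htpy_LO e) (eta'_map e) /\
  induces_bij (inQt e) (inQc e) (htpy_Qt e) (htpy_Qc e) (@nu_map A n) /\
  induces_bij (inQt e) (inQt' e) (htpy_Qt e) (htpy_Qt' e) (@kappa_map A n).
Proof.
have fgA := noetherian_ideals_fg hA; have fgT := poly_ideals_fg hA.
have half : phi 2%:R^-1 * 2%:R = 1 by rewrite -(rmorph_nat phi) -rmorphM mulVf ?rmorph1.
split; first by move=> x; apply: chi_exists.
split; first by move=> x y q q' hx _; apply: chi_wd.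
split; first exact: inLO_eta'.
split; first by move=> q q' _ _; apply: htpy_eta'.
split; first by move=> x q hx cq; apply: htpy_LO_eta'_chi.
split; first by move=> q q' hq cq'; exact: (chi_unique he cq' (eta'_chi_rep hq)).
split; first exact: eta_bij.
split; first exact: eta'_bij.
split; first exact: nu_bij.
exact: kappa_bij half.
Qed.
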